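(* Let $s(t)$, $F_\mu$ be as in the context. Put $s_i=s(t_i)$ ($i=1,2$) and define the power series in $t_1,t_2$ \[ m=\frac{s_1-s_2}{t_1-t_2},\qquad b=\frac{t_1s_2-t_2s_1}{t_1-t_2},\qquad n=m+t_1t_2\,\frac{1+\mu_2m+\mu_4m^2+\mu_6m^3}{1-\mu_3b-\mu_6b^2}. \] Then \[ F_\mu(t_1,t_2)=\Big(t_1+t_2-\mu_1t_1t_2-\mu_3\big((t_1+t_2)b+t_1t_2m\big)-\mu_4t_1t_2b-\mu_6b\big((t_1+t_2)b+2t_1t_2m\big)\Big)\cdot\frac{1+\mu_2m+\mu_4m^2+\mu_6m^3}{(1+\mu_2n+\mu_4n^2+\mu_6n^3)(1-\mu_3b-\mu_6b^2)^2}. \]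
   Context: Let $\mu_1,\mu_2,\mu_3,\mu_4,\mu_6$ be independent indeterminates, $E=\mathbb{Z}[\mu_1,\mu_2,\mu_3,\mu_4,\mu_6]$. Consider the projective cubic $Y^2Z+\mu_1XYZ+\mu_3YZ^2=X^3+\mu_2X^2Z+\mu_4XZ^2+\mu_6Z^3$ with the chord-tangent group law: neutral element $O=(0:1:0)$, and three points sum to zero iff they are the intersection points (with multiplicity) of the curve with a line. In Tate coordinates $t=-X/Y$, $s=-Z/Y$ the curve reads $s=t^3+\mu_1ts+\mu_2t^2s+\mu_3s^2+\mu_4ts^2+\mu_6s^3$; $s(t)\in E[[t]]$ is the unique power series solution with $s(0)=0$, so points near $O$ are $(t,s(t))$. The general elliptic formal group law $F_\mu(t_1,t_2)$ is the power series giving the $t$-coordinate of $P_1+P_2$, where $P_i=(t_i,s(t_i))$. (The line through $P_1,P_2$ is $s=mt+b$; the series $n$ equals the slope $s_3/t_3$ of the line through $O$ and the third intersection point $(t_3,s_3)$ of that line with the curve.) *)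

From mathcomp Require Import all_boot all_algebra.
From mathcomp Require Import mpoly.
From Stdlib Require Import ClassicalEpsilon.

Set Implicit Arguments.
Unset Strict Implicit.
Unset Printing Implicit Defensive.

Import GRing.Theory.
Local Open Scope ring_scope.

(* Formal power series in two variables t1, t2 over a commutative ring R,   *)
(* represented by their coefficient functions: f i j is the coefficient of  *)
Section PowerSeries2.
Variable R : comRingType.

Definition ps2 := nat -> nat -> R.

Definition ps2_const (c : R) : ps2 :=
  fun i j => if (i == 0%N) && (j == 0%N) then c else 0.
Definition ps2_t1 : ps2 := fun i j => if (i == 1%N) && (j == 0%N) then 1 else 0.
Definition ps2_t2 : ps2 := fun i j => if (i == 0%N) && (j == 1%N) then 1 else 0.
Definition ps2_add (f g : ps2) : ps2 := fun i j => f i j + g i j.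
Definition ps2_opp (f : ps2) : ps2 := fun i j => - f i j.
Definition ps2_sub (f g : ps2) : ps2 := ps2_add f (ps2_opp g).
Definition ps2_mul (f g : ps2) : ps2 :=
  fun i j => \sum_(k < i.+1) \sum_(l < j.+1) f k l * g (i - k)%N (j - l)%N.

(* Exact quotient f / g in R[[t1,t2]]: a series h with g * h = f
   (chosen by Hilbert's epsilon; when g is a non-zero-divisor dividing f,
   as in every use below, this is the unique quotient). *)
Definition ps2_div (f g : ps2) : ps2 :=
  epsilon (inhabits (fun _ _ => 0)) (fun h : ps2 => ps2_mul g h = f).

Definition ps2_swap (f : ps2) : ps2 := fun i j => f j i.

End PowerSeries2.

Declare Scope ps2_scope.
Delimit Scope ps2_scope with PS.
Notation "f + g" := (ps2_add f g) : ps2_scope.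
Notation "f - g" := (ps2_sub f g) : ps2_scope.
Notation "- f" := (ps2_opp f) : ps2_scope.
Notation "f * g" := (ps2_mul f g) : ps2_scope.
Notation "f / g" := (ps2_div f g) : ps2_scope.
Notation "c %:S" := (ps2_const c) (at level 2, format "c %:S") : ps2_scope.

Definition E : comRingType := {mpoly int[5]}.
Definition mu1 : E := 'X_(inord 0).
Definition mu2 : E := 'X_(inord 1).
Definition mu3 : E := 'X_(inord 2).
Definition mu4 : E := 'X_(inord 3).
Definition mu6 : E := 'X_(inord 4).

Definition t1 : ps2 E := ps2_t1 E.
Definition t2 : ps2 E := ps2_t2 E.

Local Open Scope ps2_scope.

(* Right-hand side of the curve equation in Tate coordinates
   s = t^3 + mu1 t s + mu2 t^2 s + mu3 s^2 + mu4 t s^2 + mu6 s^3,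
   evaluated at power series t, s. *)
Definition curve_rhs (t s : ps2 E) : ps2 E :=
  t * t * t + mu1%:S * t * s + mu2%:S * t * t * s + mu3%:S * s * s
  + mu4%:S * t * s * s + mu6%:S * s * s * s.

(* s(t) in E[[t]]: the unique power series with s(0) = 0 and
   s = curve_rhs t s.  It is represented as a series in the variable t1
   alone (no t2); thus tate_s = s(t1). *)
Definition tate_s : ps2 E :=
  epsilon (inhabits (fun _ _ => 0))
    (fun f : ps2 E => (forall i j, (0 < j)%N -> f i j = 0) /\ f 0%N 0%N = 0
                      /\ f = curve_rhs t1 f).

Definition s1 : ps2 E := tate_s.
Definition s2 : ps2 E := ps2_swap tate_s.

(* slope and intercept of the line s = m t + b through P1 = (t1,s1) and
   P2 = (t2,s2) *)
Definition line_m : ps2 E := (s1 - s2) / (t1 - t2).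
Definition line_b : ps2 E := (t1 * s2 - t2 * s1) / (t1 - t2).

(* Substituting s = a t + c into  s - curve_rhs t s  gives a cubic in t whose
   t^3-coefficient is  -(1 + mu2 a + mu4 a^2 + mu6 a^3)  and whose
   t^2-coefficient is  -(mu1 a + mu2 c + mu3 a^2 + 2 mu4 a c + 3 mu6 a^2 c).
   Given two of its roots ta, tb, the third root (with multiplicity) is, by
   Vieta, -(coef t^2)/(coef t^3) - ta - tb. *)
Definition line_coef3 (a : ps2 E) : ps2 E :=
  1%:S + mu2%:S * a + mu4%:S * a * a + mu6%:S * a * a * a.
Definition line_coef2 (a c : ps2 E) : ps2 E :=
  mu1%:S * a + mu2%:S * c + mu3%:S * a * a + (2 * mu4)%:S * a * c
  + (3 * mu6)%:S * a * a * c.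
Definition third_root (ta tb a c : ps2 E) : ps2 E :=
  - (line_coef2 a c / line_coef3 a) - ta - tb.

Definition t3 : ps2 E := third_root t1 t2 line_m line_b.
Definition s3 : ps2 E := line_m * t3 + line_b.

(* P1 + P2 = -P3 is the third intersection point of the curve with the line
   s = n t through O = (0,0) and P3, where n = s3 / t3; its t-coordinate is
   the root of the cubic other than 0 and t3. *)
Definition slope_OP3 : ps2 E := s3 / t3.
Definition F_mu : ps2 E := third_root 0%:S t3 slope_OP3 0%:S.

(* Substituting the chord s = m t + b through P1, P2 into the curve gives a
   cubic in t with roots t1, t2, t3; since t1 - t2 is a non-zero-divisor of
   E[[t1,t2]], dividing it out yields Vieta's relations.  The constant one,
   b D = A t1 t2 t3, says that P3 lies on the line s = n t through O with
   n = m + t1 t2 A / D.  The cubic of that line has roots 0, t3 and F = F_mu,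
   so its linear coefficient gives B t3 F = -n, while Vieta's relations for
   the chord reduce to N A t3 = - n D^2 for the numerator N of the formula;
   hence F = N A / (B D^2).  The series s(t) and the inverses of A, B, D
   exist because maps that raise the t-adic order of differences have fixed
   points. *)

From mathcomp Require Import all_boot all_algebra.
From mathcomp Require Import zify.
From Stdlib Require Import ClassicalEpsilon FunctionalExtensionality Ring.

Set Implicit Arguments.
Unset Strict Implicit.
Unset Printing Implicit Defensive.

Import GRing.Theory.
Local Open Scope ring_scope.

Section PowerSeriesRing.
Variable R : comRingType.
Implicit Types (f g h : ps2 R) (c : R).

Lemma ps2_ext f g : (forall i j, f i j = g i j) -> f = g.
Proof.
by move=> fg; apply: functional_extensionality => i; apply: functional_extensionality.
Qed.

(* A coefficient of a product only involves lower coefficients, so the ring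
   laws of ps2 R can be read off truncations to bivariate polynomials. *)
Definition ps2_trunc N f : {poly {poly R}} := \poly_(i < N) \poly_(j < N) f i j.

Lemma coef_ps2_trunc N f i j :
  (i < N)%N -> (j < N)%N -> (ps2_trunc N f)`_i`_j = f i j.
Proof. by move=> iN jN; rewrite coef_poly iN coef_poly jN. Qed.

Lemma ps2_mul_polyE (p q : {poly {poly R}}) f g i j :
  (forall k l, (k <= i)%N -> (l <= j)%N -> p`_k`_l = f k l) ->
  (forall k l, (k <= i)%N -> (l <= j)%N -> q`_k`_l = g k l) ->
  ps2_mul f g i j = (p * q)`_i`_j.
Proof.
move=> pf qg; rewrite coefM coef_sum; apply: eq_bigr => k _.
rewrite coefM; apply: eq_bigr => l _.
have := ltn_ord k; have := ltn_ord l => ltl ltk.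
by rewrite pf ?qg //; lia.
Qed.

Lemma ps2_mul_truncE N f g i j : (i < N)%N -> (j < N)%N ->
  ps2_mul f g i j = (ps2_trunc N f * ps2_trunc N g)`_i`_j.
Proof. by move=> iN jN; apply: ps2_mul_polyE => k l ki lj; rewrite coef_ps2_trunc //; lia. Qed.

Lemma ps2_mulA f g h : ps2_mul f (ps2_mul g h) = ps2_mul (ps2_mul f g) h.
Proof.
apply: ps2_ext => i j; pose N := (i + j).+1; pose T := ps2_trunc N.
have ltN k l : (k <= i)%N -> (l <= j)%N -> (k < N)%N /\ (l < N)%N by rewrite /N; lia.
have -> : ps2_mul f (ps2_mul g h) i j = (T f * (T g * T h))`_i`_j.
  apply: ps2_mul_polyE => k l ki lj; have [kN lN] := ltN k l ki lj;
    by rewrite /T ?coef_ps2_trunc ?(@ps2_mul_truncE N).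
have -> : ps2_mul (ps2_mul f g) h i j = (T f * T g * T h)`_i`_j.
  apply: ps2_mul_polyE => k l ki lj; have [kN lN] := ltN k l ki lj;
    by rewrite /T ?coef_ps2_trunc ?(@ps2_mul_truncE N).
by rewrite mulrA.
Qed.

Lemma ps2_mulC f g : ps2_mul f g = ps2_mul g f.
Proof.
apply: ps2_ext => i j.
by rewrite !(@ps2_mul_truncE (i + j).+1) 1?mulrC //; lia.
Qed.

Lemma ps2_mulDl f g h : ps2_mul (ps2_add f g) h = ps2_add (ps2_mul f h) (ps2_mul g h).
Proof.
apply: ps2_ext => i j; rewrite /ps2_mul /ps2_add -big_split; apply: eq_bigr => k _.
by rewrite -big_split; apply: eq_bigr => l _; rewrite mulrDl.
Qed.

Lemma ps2_mul1l f : ps2_mul (ps2_const 1) f = f.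
Proof.
apply: ps2_ext => i j; rewrite /ps2_mul big_ord_recl big_ord_recl /ps2_const /=.
rewrite mul1r !subn0 big1 ?addr0 => [|l _]; last by rewrite mul0r.
by rewrite big1 ?addr0 // => k _; rewrite big1 // => l _; rewrite mul0r.
Qed.

Lemma ps2_ring_theory : ring_theory (ps2_const 0) (ps2_const 1) (@ps2_add R)
  (@ps2_mul R) (@ps2_sub R) (@ps2_opp R) (@eq (ps2 R)).
Proof.
split=> [f|f g|f g h|||||//|f].
- by apply: ps2_ext => i j; rewrite /ps2_add /ps2_const; case: ifP; rewrite add0r.
- by apply: ps2_ext => i j; rewrite /ps2_add addrC.
- by apply: ps2_ext => i j; rewrite /ps2_add addrA.
- exact: ps2_mul1l.
- exact: ps2_mulC.
- exact: ps2_mulA.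
- exact: ps2_mulDl.
- by apply: ps2_ext => i j; rewrite /ps2_add /ps2_opp /ps2_const subrr; case: ifP.
Qed.

End PowerSeriesRing.

Section PowerSeriesTheory.
Variable R : comRingType.
Add Ring ps2R : (ps2_ring_theory R).
Local Open Scope ps2_scope.
Local Notation t1 := (ps2_t1 R).
Local Notation t2 := (ps2_t2 R).
Implicit Types (f g h : ps2 R) (c : R).

Lemma big_ord2_single n m (F : nat -> nat -> R) a b :
  (a < n)%N -> (b < m)%N ->
  (forall k l, (k < n)%N -> (l < m)%N -> (k != a) || (l != b) -> F k l = 0%R) ->
  (\sum_(k < n) \sum_(l < m) F k l = F a b)%R.
Proof.
move=> an bm F0; rewrite (bigD1 (Ordinal an)) //= (bigD1 (Ordinal bm)) //=.
rewrite big1 ?addr0 => [|l lb]; last by rewrite F0 // lb orbT.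
by rewrite big1 ?addr0 // => k ka; rewrite big1 // => l _; rewrite F0 // ka.
Qed.

Lemma coef_ps2_mulCl c f i j : (c%:S * f) i j = (c * f i j)%R.
Proof.
rewrite /ps2_mul (@big_ord2_single _ _ (fun k l => c%:S k l * f (i - k)%N (j - l)%N)%R 0 0) //.
  by rewrite /ps2_const /= !subn0.
by move=> [|k] [|l] //= _ _ _; rewrite /ps2_const mul0r.
Qed.

Lemma coef_ps2_mult1l f i j : (t1 * f) i j = if i is i'.+1 then f i' j else 0%R.
Proof.
case: i => [|i].
  by rewrite /ps2_mul big_ord1 big1 // => l _; rewrite /ps2_t1 mul0r.
rewrite /ps2_mul (@big_ord2_single _ _ (fun k l => t1 k l * f (i.+1 - k)%N (j - l)%N)%R 1 0) //.
  by rewrite /ps2_t1 /= mul1r subSS !subn0.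
by move=> [|[|k]] [|l] //= _ _ _; rewrite /ps2_t1 mul0r.
Qed.

Lemma ps2_swapM f g : ps2_swap (f * g) = ps2_swap f * ps2_swap g.
Proof. by apply: ps2_ext => i j; rewrite /ps2_mul /ps2_swap exchange_big. Qed.

Lemma ps2_swapD f g : ps2_swap (f + g) = ps2_swap f + ps2_swap g.
Proof. by []. Qed.

Lemma ps2_swapC c : ps2_swap c%:S = c%:S.
Proof. by apply: ps2_ext => i j; rewrite /ps2_swap /ps2_const andbC. Qed.

Lemma ps2_swap_t1 : ps2_swap t1 = t2.
Proof. by apply: ps2_ext => i j; rewrite /ps2_swap /ps2_t1 /ps2_t2 andbC. Qed.

Lemma ps2_swap_t2 : ps2_swap t2 = t1.
Proof. by apply: ps2_ext => i j; rewrite /ps2_swap /ps2_t1 /ps2_t2 andbC. Qed.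

Lemma ps2_swapK f : ps2_swap (ps2_swap f) = f.
Proof. by []. Qed.

Lemma coef_ps2_mult2l f i j : (t2 * f) i j = if j is j'.+1 then f i j' else 0%R.
Proof. by rewrite -[t2 * f]ps2_swapK ps2_swapM ps2_swap_t2 /ps2_swap coef_ps2_mult1l. Qed.

Lemma ps2_constD (a b : R) : (a + b)%R%:S = a%:S + b%:S.
Proof. by apply: ps2_ext => i j; rewrite /ps2_add /ps2_const; case: ifP; rewrite ?addr0. Qed.

Lemma ps2_const2 (a : R) : (2 * a)%R%:S = a%:S + a%:S.
Proof. by rewrite -ps2_constD mulr_natl mulr2n. Qed.

Lemma ps2_const_two : (2 : R)%:S = 1%:S + 1%:S.
Proof. by rewrite -(mulr1 2) ps2_const2. Qed.

Lemma ps2_const3 (a : R) : (3 * a)%R%:S = a%:S + a%:S + a%:S.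
Proof. by rewrite -!ps2_constD mulr_natl !mulrS mulr0n addr0 addrA. Qed.

Definition order_ge k f := forall i j, (i + j < k)%N -> f i j = 0%R.

Lemma order_ge0 f : order_ge 0 f.
Proof. by move=> i j. Qed.

Lemma order_ge_le k k' f : (k' <= k)%N -> order_ge k f -> order_ge k' f.
Proof. by move=> k'k fk i j ijk'; rewrite fk //; lia. Qed.

Lemma order_geC0 k : order_ge k 0%:S.
Proof. by move=> i j _; rewrite /ps2_const; case: ifP. Qed.

Lemma order_geD k f g : order_ge k f -> order_ge k g -> order_ge k (f + g).
Proof. by move=> fk gk i j ijk; rewrite /ps2_add fk ?gk ?addr0. Qed.

Lemma order_geN k f : order_ge k f -> order_ge k (- f).
Proof. by move=> fk i j ijk; rewrite /ps2_opp fk ?oppr0. Qed.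

Lemma order_geB k f g : order_ge k f -> order_ge k g -> order_ge k (f - g).
Proof. by move=> fk gk; apply: order_geD fk (order_geN gk). Qed.

Lemma order_geM a b f g : order_ge a f -> order_ge b g -> order_ge (a + b) (f * g).
Proof.
move=> fa gb i j ijab; rewrite /ps2_mul big1 // => k _; rewrite big1 // => l _.
have := ltn_ord k; have := ltn_ord l => li kj.
have [kla|akl] := ltnP (k + l) a; first by rewrite fa // mul0r.
by rewrite gb ?mulr0 //; lia.
Qed.

Lemma order_geMle a b k f g :
  order_ge a f -> order_ge b g -> (k <= a + b)%N -> order_ge k (f * g).
Proof. by move=> fa gb kab; apply: order_ge_le kab (order_geM fa gb). Qed.

Lemma order_geCl k c f : order_ge k f -> order_ge k (c%:S * f).
Proof. by move=> fk i j ijk; rewrite coef_ps2_mulCl fk ?mulr0. Qed.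

Lemma order_ge_t1 : order_ge 1 t1.
Proof. by move=> [|i] [|j]. Qed.

Lemma order_ge_t2 : order_ge 1 t2.
Proof. by move=> [|i] [|j]. Qed.

Lemma order_ge_eq k f g i j : order_ge k (f - g) -> (i + j < k)%N -> f i j = g i j.
Proof. by move=> fgk ijk; apply/eqP; rewrite -subr_eq0; apply/eqP; apply: fgk. Qed.

Lemma ps2_contraction_fixpoint (Phi : ps2 R -> ps2 R) :
  (forall k f g, order_ge k (f - g) -> order_ge k.+1 (Phi f - Phi g)) ->
  exists f, f = Phi f.
Proof.
move=> contr; pose x n := iter n Phi 0%:S.
have step n : order_ge n (x n.+1 - x n).
  by elim: n => [|n IHn]; [exact: order_ge0 | exact: contr].
have cauchy n d : order_ge n (x (d + n)%N - x n).
  elim: d => [|d IHd]; first by rewrite add0n (_ : x n - x n = 0%:S); [exact: order_geC0 | ring].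
  rewrite (_ : x _ - x n = (x (d + n).+1 - x (d + n)%N) + (x (d + n)%N - x n)); last first.
    by rewrite addSn; ring.
  by apply: order_geD IHd; apply: order_ge_le (step _); lia.
pose f i j := x (i + j).+1 i j.
have limit N : order_ge N (f - x N).
  move=> i j ijN; rewrite /ps2_sub /ps2_add /ps2_opp /f.
  have := cauchy (i + j).+1 (N - (i + j).+1)%N; rewrite subnK //.
  by move/order_ge_eq => -> //; rewrite subrr.
exists f; apply: ps2_ext => i j.
rewrite (order_ge_eq (contr _ _ _ (limit (i + j).+1))) //.
by rewrite /f; symmetry; apply: (order_ge_eq (step (i + j).+1)); lia.
Qed.

Lemma ps2_inv_exists g : order_ge 1 (g - 1%:S) -> exists h, g * h = 1%:S.
Proof.
move=> g1.
have contr k f f' : order_ge k (f - f') ->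
    order_ge k.+1 ((1%:S - (g - 1%:S) * f) - (1%:S - (g - 1%:S) * f')).
  move=> ff'; rewrite (_ : _ - _ = - ((g - 1%:S) * (f - f'))); last by ring.
  exact/order_geN/(order_geM g1 ff').
have [f f_fix] := ps2_contraction_fixpoint contr.
exists f; transitivity ((g - 1%:S) * f + f); first ring.
by rewrite {2}f_fix; ring.
Qed.

Definition ps2_reg f := forall g, f * g = 0%:S -> g = 0%:S.

Lemma ps2_regP f g h : ps2_reg f -> f * g = f * h -> g = h.
Proof.
move=> freg fgh; have gh0 : g - h = 0%:S.
  by apply: freg; transitivity (f * g - f * h); [ring | rewrite fgh; ring].
by transitivity ((g - h) + h); [ring | rewrite gh0; ring].
Qed.

Lemma ps2_regM f g : ps2_reg f -> ps2_reg g -> ps2_reg (f * g).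
Proof.
move=> freg greg x fgx; apply/greg/freg.
by transitivity (f * g * x); [ring | exact: fgx].
Qed.

Lemma ps2_regN f : ps2_reg f -> ps2_reg (- f).
Proof.
move=> freg x fx; apply: freg.
by transitivity (- (- f * x)); [ring | rewrite fx; ring].
Qed.

Lemma ps2_reg_unit f h : f * h = 1%:S -> ps2_reg f.
Proof.
move=> fh x fx; transitivity ((f * h) * x); first by rewrite fh; ring.
by transitivity (h * (f * x)); [ring | rewrite fx; ring].
Qed.

Lemma ps2_reg_swap f : ps2_reg f -> ps2_reg (ps2_swap f).
Proof.
move=> freg x fx; rewrite -[x]ps2_swapK (freg (ps2_swap x)) ?ps2_swapC //.
by rewrite -ps2_swapM fx ps2_swapC.
Qed.

(* Reading off the coefficient of t1^(i+1) t2^j of f * g determines g i j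
   from coefficients of lower total degree, or of equal degree and lower j. *)
Lemma ps2_reg_coef10 f u : f 0%N 0%N = 0%R -> (u * f 1%N 0%N = 1)%R -> ps2_reg f.
Proof.
move=> f00 uf g fg.
suff g0 n j i : (i + j)%N = n -> g i j = 0%R.
  by apply: ps2_ext => i j; rewrite (g0 (i + j)%N j i) // /ps2_const; case: ifP.
elim/ltn_ind: n j i => n IHn; elim/ltn_ind => j IHj i ijn.
have := congr1 (fun h => h i.+1 j) fg; rewrite /ps2_mul.
rewrite (@big_ord2_single _ _ (fun k l => f k l * g (i.+1 - k)%N (j - l)%N)%R 1 0) //;
  last first.
  move=> [|[|k]] [|[|l]] //= ltk ltl _; rewrite ?f00 ?mul0r //.
  - by rewrite subn0 subn1 (IHj j.-1) ?mulr0 //; lia.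
  - by rewrite (IHn (i.+1 + j - l.+2)%N) ?mulr0 //; lia.
  - by rewrite (IHn (i + j - 1)%N) ?mulr0 //; lia.
  - by rewrite (IHn (i + j - l.+2)%N) ?mulr0 //; lia.
  - by rewrite (IHn (i.+1 + j - k.+2)%N) ?mulr0 //; lia.
  - by rewrite (IHn (i.+1 + j - k.+2 - 1)%N) ?mulr0 //; lia.
  - by rewrite (IHn (i.+1 + j - k.+2 - l.+2)%N) ?mulr0 //; lia.
rewrite subSS !subn0 /ps2_const /= => fg_ij.
by rewrite -[g i j]mul1r -uf -mulrA fg_ij mulr0.
Qed.

Lemma ps2_divP f g q : ps2_reg g -> g * q = f -> f / g = q.
Proof.
move=> greg gq; apply: (ps2_regP greg); rewrite gq.
exact: (epsilon_spec _ (fun q => g * q = f) (ex_intro _ q gq)).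
Qed.

Lemma ps2_div_unit f g h : g * h = 1%:S -> f / g = h * f.
Proof.
move=> gh; apply: ps2_divP (ps2_reg_unit gh) _.
by transitivity ((g * h) * f); [ring | rewrite gh; ring].
Qed.

Definition t2_free f := forall i j, (0 < j)%N -> f i j = 0%R.

Lemma t2_freeD f g : t2_free f -> t2_free g -> t2_free (f + g).
Proof. by move=> f0 g0 i j j0; rewrite /ps2_add f0 ?g0 ?addr0. Qed.

Lemma t2_freeM f g : t2_free f -> t2_free g -> t2_free (f * g).
Proof.
move=> f0 g0 i j j0; rewrite /ps2_mul big1 // => k _; rewrite big1 // => l _.
have := ltn_ord l => lj.
by have [->|l0] := posnP l; [rewrite subn0 g0 ?mulr0 | rewrite f0 ?mul0r].
Qed.

Lemma t2_freeC c : t2_free c%:S.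
Proof. by move=> i [|j] // _; rewrite /ps2_const andbF. Qed.

Lemma t2_free_t1 : t2_free t1.
Proof. by move=> i [|j] // _; rewrite /ps2_t1 andbF. Qed.

Definition cubic k0 k1 k2 k3 t : ps2 R := k0 + k1 * t + k2 * t * t + k3 * t * t * t.

Lemma cubic_two_roots k0 k1 k2 k3 x1 x2 : ps2_reg (x1 - x2) ->
  cubic k0 k1 k2 k3 x1 = 0%:S -> cubic k0 k1 k2 k3 x2 = 0%:S ->
  k1 = - (k2 * (x1 + x2)) - k3 * (x1 * x1 + x1 * x2 + x2 * x2)
  /\ k0 = k2 * x1 * x2 + k3 * x1 * x2 * (x1 + x2).
Proof.
move=> reg12 p1 p2; split; apply: (ps2_regP reg12).
- transitivity ((x1 - x2) * (- (k2 * (x1 + x2)) - k3 * (x1 * x1 + x1 * x2 + x2 * x2))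
                + (cubic k0 k1 k2 k3 x1 - cubic k0 k1 k2 k3 x2)).
    by rewrite /cubic; ring.
  by rewrite p1 p2; ring.
- transitivity ((x1 - x2) * (k2 * x1 * x2 + k3 * x1 * x2 * (x1 + x2))
                + (x1 * cubic k0 k1 k2 k3 x2 - x2 * cubic k0 k1 k2 k3 x1)).
    by rewrite /cubic; ring.
  by rewrite p1 p2; ring.
Qed.

Lemma cubic_third_root k0 k1 k2 k3 x1 x2 x3 : ps2_reg (x1 - x2) ->
  cubic k0 k1 k2 k3 x1 = 0%:S -> cubic k0 k1 k2 k3 x2 = 0%:S ->
  k3 * (x1 + x2 + x3) = - k2 ->
  [/\ cubic k0 k1 k2 k3 x3 = 0%:S, k0 = - (k3 * x1 * x2 * x3)
    & k1 = k3 * (x1 * x2 + x1 * x3 + x2 * x3)].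
Proof.
move=> reg12 p1 p2 sum3; have [-> ->] := cubic_two_roots reg12 p1 p2.
have -> : k2 = - (k3 * (x1 + x2 + x3)) by rewrite sum3; ring.
by split; rewrite /cubic; ring.
Qed.

End PowerSeriesTheory.

Add Ring ps2E : (ps2_ring_theory E).
Local Open Scope ps2_scope.

Lemma curve_rhsB t a c : curve_rhs t a - curve_rhs t c =
  (a - c) * (mu1%:S * t + mu2%:S * t * t + mu3%:S * (a + c) + mu4%:S * t * (a + c)
             + mu6%:S * (a * a + a * c + c * c)).
Proof. by rewrite /curve_rhs; ring. Qed.

Lemma order_ge_curve_rhsB k a c : order_ge 1 a -> order_ge 1 c ->
  order_ge k (a - c) -> order_ge k.+1 (curve_rhs t1 a - curve_rhs t1 c).
Proof.
move=> a1 c1 ack; rewrite curve_rhsB -addn1; apply: order_geM ack _.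
have ac1 := order_geD a1 c1; have t1_1 := order_ge_t1 E.
have order2 f g : order_ge 1 f -> order_ge 1 g -> order_ge 1 (f * g).
  by move=> f1 g1; apply: order_geMle f1 g1 _.
repeat apply: order_geD; do ?[apply: order_geCl]; do ?[apply: order2];
  by do ?[apply: order_geCl]; do ?[apply: order_geD]; do ?[apply: order2].
Qed.

Lemma order_ge_curve_rhs k f : order_ge k f -> (0 < k <= 2)%N ->
  order_ge k.+1 (curve_rhs t1 f).
Proof.
move=> fk /andP[k0 k2]; have t1_1 := order_ge_t1 E.
rewrite /curve_rhs; repeat apply: order_geD.
- by apply: order_geMle (order_geM t1_1 t1_1) t1_1 _; lia.
- by apply: order_geMle (order_geCl _ t1_1) fk _; lia.
- by apply: order_geMle (order_geM (order_geCl _ t1_1) t1_1) fk _; lia.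
- by apply: order_geMle (order_geCl _ fk) fk _; lia.
- by apply: order_geMle (order_geM (order_geCl _ t1_1) fk) fk _; lia.
- by apply: order_geMle (order_geM (order_geCl _ fk) fk) fk _; lia.
Qed.

Definition t1_part (f : ps2 E) : ps2 E :=
  fun i j => if (0 < i)%N && (j == 0)%N then f i j else 0%R.

Lemma order_ge1_t1_part f : order_ge 1 (t1_part f).
Proof. by move=> [|i] [|j]. Qed.

Lemma t2_free_t1_part f : t2_free (t1_part f).
Proof. by move=> i [|j] // _; rewrite /t1_part andbF. Qed.

Lemma t2_free_curve_rhs f : t2_free f -> t2_free (curve_rhs t1 f).
Proof.
move=> f0; have t1_0 := t2_free_t1 E.
by rewrite /curve_rhs; repeat apply: t2_freeD; repeat apply: t2_freeM; try apply: t2_freeC.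
Qed.

Lemma tate_s_exists : exists f : ps2 E,
  t2_free f /\ f 0%N 0%N = 0%R /\ f = curve_rhs t1 f.
Proof.
have contr k f g : order_ge k (f - g) ->
    order_ge k.+1 (curve_rhs t1 (t1_part f) - curve_rhs t1 (t1_part g)).
  move=> fgk; apply: order_ge_curve_rhsB (order_ge1_t1_part _) (order_ge1_t1_part _) _.
  move=> i j ijk; rewrite /ps2_sub /ps2_add /ps2_opp /t1_part.
  by case: ifP => _; [exact: fgk | rewrite subrr].
have [f f_fix] := ps2_contraction_fixpoint contr.
have f0 : t2_free f by rewrite f_fix; apply/t2_free_curve_rhs/t2_free_t1_part.
have f00 : f 0%N 0%N = 0%R.
  by rewrite f_fix; apply: order_ge_curve_rhs (order_ge1_t1_part _) _ _ _ _.
have f_part : t1_part f = f.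
  by apply: ps2_ext => -[|i] [|j]; rewrite /t1_part //= f0.
by exists f; split=> //; split=> //; rewrite {1}f_fix f_part.
Qed.

Lemma tate_s_spec : t2_free tate_s /\ tate_s 0%N 0%N = 0%R /\ tate_s = curve_rhs t1 tate_s.
Proof. exact: (epsilon_spec _ _ tate_s_exists). Qed.

Lemma tate_s_t2_free : t2_free tate_s.
Proof. by case: tate_s_spec. Qed.

Lemma tate_s00 : tate_s 0%N 0%N = 0%R.
Proof. by case: tate_s_spec => _ []. Qed.

Lemma tate_sE : tate_s = curve_rhs t1 tate_s.
Proof. by case: tate_s_spec => _ []. Qed.

Lemma s2E : s2 = curve_rhs t2 s2.
Proof.
by rewrite /s2 {1}tate_sE /curve_rhs !ps2_swapD !ps2_swapM !ps2_swapC /t1 ps2_swap_t1.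
Qed.

Lemma order_ge3_tate_s : order_ge 3 tate_s.
Proof.
have s1 : order_ge 1 tate_s by move=> [|i] [|j] //; rewrite tate_s00.
have s2 : order_ge 2 tate_s by rewrite tate_sE; apply: order_ge_curve_rhs s1 _.
by rewrite tate_sE; apply: order_ge_curve_rhs s2 _.
Qed.

(* (t1^k - t2^k) / (t1 - t2) = \sum_(i + j = k - 1) t1^i t2^j  and
   (t1 t2^k - t2 t1^k) / (t1 - t2) = - \sum_(i + j = k, 0 < i, 0 < j) t1^i t2^j *)
Definition slope_series : ps2 E := fun i j => tate_s (i + j).+1 0%N.
Definition intercept_series : ps2 E :=
  fun i j => if (0 < i)%N && (0 < j)%N then (- tate_s (i + j)%N 0%N)%R else 0%R.

Lemma slope_seriesP : (t1 - t2) * slope_series = s1 - s2.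
Proof.
rewrite (_ : _ * _ = t1 * slope_series - t2 * slope_series); last by ring.
have s0 := tate_s_t2_free.
apply: ps2_ext => -[|i] [|j];
  rewrite /ps2_sub /ps2_add /ps2_opp coef_ps2_mult1l coef_ps2_mult2l /s1 /s2 /ps2_swap /slope_series.
- by rewrite !subrr.
- by rewrite add0n (s0 0%N j.+1) // sub0r.
- by rewrite addn0 (s0 0%N i.+1) // subr0.
- by rewrite (s0 i.+1 j.+1) // (s0 j.+1 i.+1) // addnS addSn !subrr.
Qed.

Lemma intercept_seriesP : (t1 - t2) * intercept_series = t1 * s2 - t2 * s1.
Proof.
rewrite (_ : _ * _ = t1 * intercept_series - t2 * intercept_series); last by ring.
have s0 := tate_s_t2_free; have s00 := tate_s00.
apply: ps2_ext => -[|[|i]] [|[|j]];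
  rewrite /ps2_sub /ps2_add /ps2_opp !coef_ps2_mult1l !coef_ps2_mult2l /s1 /s2 /ps2_swap
    /intercept_series /=.
- by [].
- by rewrite s00.
- by rewrite (s0 0%N j.+1).
- by rewrite s00.
- by rewrite !subrr.
- by rewrite (s0 1%N j.+1) // sub0r subr0 opprK add1n.
- by rewrite (s0 0%N i.+1).
- by rewrite (s0 1%N i.+1) // sub0r subr0 addn1.
- by rewrite (s0 j.+2 i.+1) // (s0 i.+2 j.+1) // -addSnnS !subrr.
Qed.

Lemma ps2_reg_t1 : ps2_reg t1.
Proof. by apply: (@ps2_reg_coef10 _ _ 1); rewrite /t1 /ps2_t1 //= mulr1. Qed.

Lemma ps2_reg_t2 : ps2_reg t2.
Proof. by rewrite /t2 -ps2_swap_t1; apply: ps2_reg_swap ps2_reg_t1. Qed.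

Lemma ps2_reg_t1Bt2 : ps2_reg (t1 - t2).
Proof.
by apply: (@ps2_reg_coef10 _ _ 1); rewrite /ps2_sub /ps2_add /ps2_opp /t1 /t2 /ps2_t1 /ps2_t2 /=
  ?subrr // subr0 mulr1.
Qed.

Lemma line_mE : line_m = slope_series.
Proof. exact: ps2_divP ps2_reg_t1Bt2 slope_seriesP. Qed.

Lemma line_bE : line_b = intercept_series.
Proof. exact: ps2_divP ps2_reg_t1Bt2 intercept_seriesP. Qed.

Lemma order_ge2_line_m : order_ge 2 line_m.
Proof. rewrite line_mE => i j ij2; rewrite /slope_series order_ge3_tate_s //; lia. Qed.

Lemma order_ge2_line_b : order_ge 2 line_b.
Proof.
rewrite line_bE => i j ij2; rewrite /intercept_series.
by case: ifP => // _; rewrite order_ge3_tate_s ?oppr0 //; lia.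
Qed.

Lemma chord_through_P1P2 : line_m * t1 + line_b = s1 /\ line_m * t2 + line_b = s2.
Proof.
have [mP bP] := (slope_seriesP, intercept_seriesP); rewrite -line_mE in mP; rewrite -line_bE in bP.
split; apply: (ps2_regP ps2_reg_t1Bt2).
- transitivity (t1 * ((t1 - t2) * line_m) + (t1 - t2) * line_b); first ring.
  by rewrite mP bP; ring.
- transitivity (t2 * ((t1 - t2) * line_m) + (t1 - t2) * line_b); first ring.
  by rewrite mP bP; ring.
Qed.

Definition line_denom (c : ps2 E) : ps2 E := 1%:S - mu3%:S * c - mu6%:S * c * c.
Definition line_coef1 (a c : ps2 E) : ps2 E :=
  a - (mu1%:S * c + (2 * mu3)%:S * a * c + mu4%:S * c * c + (3 * mu6)%:S * a * c * c).
Definition line_cubic (a c t : ps2 E) : ps2 E := (a * t + c) - curve_rhs t (a * t + c).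

Lemma line_cubicE a c t : line_cubic a c t =
  cubic (c * line_denom c) (line_coef1 a c) (- line_coef2 a c) (- line_coef3 a) t.
Proof.
rewrite /line_cubic /curve_rhs /cubic /line_denom /line_coef1 /line_coef2 /line_coef3.
by rewrite !ps2_const2 !ps2_const3; ring.
Qed.

Lemma line_cubic_origin a : line_cubic a 0%:S 0%:S = 0%:S.
Proof. by rewrite /line_cubic /curve_rhs; ring. Qed.

Lemma line_coef1_origin a : line_coef1 a 0%:S = a.
Proof. by rewrite /line_coef1; ring. Qed.

Lemma line_coef3_inv a : order_ge 1 a -> exists h, line_coef3 a * h = 1%:S.
Proof.
move=> a1; apply: ps2_inv_exists.
rewrite (_ : _ - _ = mu2%:S * a + mu4%:S * a * a + mu6%:S * a * a * a); last first.
  by rewrite /line_coef3; ring.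
by repeat apply: order_geD; [apply: order_geCl a1 | ..];
  apply: order_geMle (order_ge0 _) a1 _.
Qed.

Lemma line_denom_inv c : order_ge 1 c -> exists h, line_denom c * h = 1%:S.
Proof.
move=> c1; apply: ps2_inv_exists.
rewrite (_ : _ - _ = - (mu3%:S * c) - mu6%:S * c * c); last by rewrite /line_denom; ring.
by apply: order_geB; [apply/order_geN/order_geCl | apply: order_geMle (order_ge0 _) c1 _].
Qed.

Lemma line_coef3_third_root ta tb a c h : line_coef3 a * h = 1%:S ->
  line_coef3 a * (ta + tb + third_root ta tb a c) = - line_coef2 a c.
Proof.
move=> ah; rewrite /third_root (ps2_div_unit _ ah).
by transitivity (- (line_coef3 a * h * line_coef2 a c)); [ring | rewrite ah; ring].
Qed.

Lemma line_cubic_third_root a c x1 x2 h : ps2_reg (x1 - x2) ->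
  line_coef3 a * h = 1%:S -> line_cubic a c x1 = 0%:S -> line_cubic a c x2 = 0%:S ->
  let x3 := third_root x1 x2 a c in
  [/\ line_cubic a c x3 = 0%:S,
      c * line_denom c = line_coef3 a * x1 * x2 * x3,
      line_coef1 a c = - (line_coef3 a * (x1 * x2 + x1 * x3 + x2 * x3))
    & line_coef2 a c = - (line_coef3 a * (x1 + x2 + x3))].
Proof.
move=> reg12 ah; rewrite !line_cubicE => p1 p2 /=.
have sum3 := line_coef3_third_root x1 x2 c ah.
have sum3' : - line_coef3 a * (x1 + x2 + third_root x1 x2 a c) = - - line_coef2 a c.
  by rewrite -sum3; ring.
have [p3 e0 e1] := cubic_third_root reg12 p1 p2 sum3'.
split; first by rewrite line_cubicE.
- by rewrite e0; ring.
- by rewrite e1; ring.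
- by rewrite sum3; ring.
Qed.

Definition chord_numer (T1 T2 a c : ps2 E) : ps2 E :=
  T1 + T2 - mu1%:S * T1 * T2
  - mu3%:S * ((T1 + T2) * c + T1 * T2 * a)
  - mu4%:S * T1 * T2 * c
  - mu6%:S * c * ((T1 + T2) * c + 2%:S * T1 * T2 * a).

Lemma chord_numer_vieta T1 T2 T3 a c :
  c * line_denom c = line_coef3 a * T1 * T2 * T3 ->
  line_coef1 a c = - (line_coef3 a * (T1 * T2 + T1 * T3 + T2 * T3)) ->
  line_coef2 a c = - (line_coef3 a * (T1 + T2 + T3)) ->
  chord_numer T1 T2 a c * c + T1 * T2 * (a * line_denom c + T1 * T2 * line_coef3 a) = 0%:S.
Proof.
move=> e0 e1 e2.
transitivity ((T1 + T2) * (c * line_denom c + line_coef2 a c * T1 * T2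
                           + line_coef3 a * T1 * T2 * (T1 + T2))
  + T1 * T2 * (line_coef1 a c - line_coef2 a c * (T1 + T2)
               - line_coef3 a * (T1 * T1 + T1 * T2 + T2 * T2))).
  rewrite /chord_numer /line_denom /line_coef1 /line_coef2 /line_coef3.
  by rewrite ps2_const_two !ps2_const2 !ps2_const3; ring.
by rewrite e0 e1 e2; ring.
Qed.

Lemma order_ge2_line_coef2 a c : order_ge 2 a -> order_ge 2 c -> order_ge 2 (line_coef2 a c).
Proof.
move=> a2 c2; rewrite /line_coef2; repeat apply: order_geD;
  do ?[apply: order_geCl]; do ?[apply: order_geMle (order_ge0 _) c2 _];
  by do ?[apply: order_geMle (order_ge0 _) a2 _].
Qed.

Lemma order_ge1_chord_slope f : order_ge 1 (line_m + t1 * t2 * f).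
Proof.
apply: order_geD (order_ge_le _ order_ge2_line_m) _ => //.
exact: order_geMle (order_geM (order_ge_t1 E) (order_ge_t2 E)) (order_ge0 _) _.
Qed.

Section AdditionLaw.
Variables Ai Di Bi : ps2 E.
Local Notation A := (line_coef3 line_m).
Local Notation D := (line_denom line_b).
Local Notation n := (line_m + t1 * t2 * (A / D)).
Local Notation B := (line_coef3 n).
Hypotheses (Ai_inv : A * Ai = 1%:S) (Di_inv : D * Di = 1%:S) (Bi_inv : B * Bi = 1%:S).

Lemma line_cubic_P1P2 :
  line_cubic line_m line_b t1 = 0%:S /\ line_cubic line_m line_b t2 = 0%:S.
Proof.
have [P1 P2] := chord_through_P1P2.
by rewrite /line_cubic P1 P2 {1}s2E /s1 {1}tate_sE; split; ring.
Qed.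

Lemma chord_vieta :
  [/\ line_cubic line_m line_b t3 = 0%:S,
      line_b * D = A * t1 * t2 * t3,
      line_coef1 line_m line_b = - (A * (t1 * t2 + t1 * t3 + t2 * t3))
    & line_coef2 line_m line_b = - (A * (t1 + t2 + t3))].
Proof.
have [P1 P2] := line_cubic_P1P2.
exact: line_cubic_third_root ps2_reg_t1Bt2 Ai_inv P1 P2.
Qed.

Lemma ps2_reg_t3 : ps2_reg t3.
Proof.
have C2_2 := order_ge2_line_coef2 order_ge2_line_m order_ge2_line_b.
have AiC2_2 := order_geMle (order_ge0 Ai) C2_2 (leqnn _).
rewrite /t3 /third_root (ps2_div_unit _ Ai_inv).
apply: (@ps2_reg_coef10 _ _ (-1)%R);
  rewrite /ps2_sub /ps2_add /ps2_opp AiC2_2 // /t1 /t2 /ps2_t1 /ps2_t2 /= !oppr0 !addr0 //.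
by rewrite add0r mulrNN mulr1.
Qed.

Lemma s3_on_line_through_O : s3 = t3 * n.
Proof.
have [_ bD _ _] := chord_vieta.
rewrite /s3 (ps2_div_unit _ Di_inv).
transitivity (t3 * line_m + line_b * (D * Di)); first by rewrite Di_inv; ring.
by transitivity (t3 * line_m + Di * (line_b * D)); [ring | rewrite bD; ring].
Qed.

Lemma slope_OP3E : slope_OP3 = n.
Proof. exact/(ps2_divP ps2_reg_t3)/esym/s3_on_line_through_O. Qed.

Lemma F_mu_vieta : n = - (B * (t3 * F_mu)).
Proof.
have P3 : line_cubic n 0%:S t3 = 0%:S.
  have [P3 _ _ _] := chord_vieta.
  rewrite /line_cubic (_ : n * t3 + 0%:S = line_m * t3 + line_b); first exact: P3.
  by rewrite -[line_m * t3 + line_b]/s3 s3_on_line_through_O; ring.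
have reg : ps2_reg (0%:S - t3) by rewrite (_ : _ - _ = - t3); [exact/ps2_regN/ps2_reg_t3 | ring].
have [_ _ e1 _] := line_cubic_third_root reg Bi_inv (line_cubic_origin n) P3.
rewrite line_coef1_origin in e1; rewrite [LHS]e1 /F_mu slope_OP3E; ring.
Qed.

Lemma chord_numer_eq : chord_numer t1 t2 line_m line_b * A * t3 + n * D * D = 0%:S.
Proof.
have [_ bD e1 e2] := chord_vieta.
have numer0 := chord_numer_vieta bD e1 e2.
have nD : n * D = line_m * D + t1 * t2 * A.
  rewrite (ps2_div_unit _ Di_inv).
  by transitivity (line_m * D + t1 * t2 * A * (D * Di)); [ring | rewrite Di_inv; ring].
apply: (ps2_regM ps2_reg_t1 ps2_reg_t2).
transitivity (chord_numer t1 t2 line_m line_b * (A * t1 * t2 * t3) + D * (t1 * t2 * (n * D)));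
  first ring.
rewrite -bD nD; transitivity (D * (chord_numer t1 t2 line_m line_b * line_b
  + t1 * t2 * (line_m * D + t1 * t2 * A))); first ring.
by rewrite numer0; ring.
Qed.

Lemma F_mu_formula : F_mu = chord_numer t1 t2 line_m line_b * (Bi * (Di * Di) * A).
Proof.
apply: (ps2_regP (ps2_regM (ps2_reg_unit Bi_inv) ps2_reg_t3)).
transitivity (- - (B * (t3 * F_mu))); first ring.
rewrite -F_mu_vieta; symmetry.
transitivity ((B * Bi) * (Di * Di) * (chord_numer t1 t2 line_m line_b * A * t3 + n * D * D)
  - n * ((B * Bi) * (D * Di) * (D * Di))); first ring.
by rewrite chord_numer_eq Bi_inv Di_inv; ring.
Qed.

End AdditionLaw.

Theorem mainTheorem1 :
  let m := line_m in
  let b := line_b in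
  let A := (1%:S + mu2%:S * m + mu4%:S * m * m + mu6%:S * m * m * m)%PS in
  let D := (1%:S - mu3%:S * b - mu6%:S * b * b)%PS in
  let n := (m + t1 * t2 * (A / D))%PS in
  let B := (1%:S + mu2%:S * n + mu4%:S * n * n + mu6%:S * n * n * n)%PS in
  F_mu =
  ((t1 + t2 - mu1%:S * t1 * t2
    - mu3%:S * ((t1 + t2) * b + t1 * t2 * m)
    - mu4%:S * t1 * t2 * b
    - mu6%:S * b * ((t1 + t2) * b + 2%:S * t1 * t2 * m))
   * (A / (B * (D * D))))%PS.
Proof.
move=> m b A D n B.
have [Ai Ai_inv] := line_coef3_inv (order_ge_le (isT : 1 <= 2)%N order_ge2_line_m).
have [Di Di_inv] := line_denom_inv (order_ge_le (isT : 1 <= 2)%N order_ge2_line_b).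
have [Bi Bi_inv] := line_coef3_inv (order_ge1_chord_slope (A / D)).
have BDD_inv : B * (D * D) * (Bi * (Di * Di)) = 1%:S.
  transitivity ((B * Bi) * (D * Di) * (D * Di)); first ring.
  by rewrite Bi_inv Di_inv; ring.
rewrite (ps2_div_unit _ BDD_inv).
exact: F_mu_formula Ai_inv Di_inv Bi_inv.
Qed.
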